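(* Let $L$ be a real Galois extension of $\mathbb{Q}$ with Galois group isomorphic to $\mathbb{Z}/2\mathbb{Z}\times\mathbb{Z}/2\mathbb{Z}$, let $u_1,u_2,u_3>1$ be the fundamental units of its three quadratic subfields, ordered so that $u_1<u_2<u_3$, and let $E=\{u_1^{m_1}u_2^{m_2}u_3^{m_3}:m_i\in\mathbb{Z}\}$. Put $X_1=\log u_2\log u_3$, $X_2=\log u_1\log u_3$, $X_3=\log u_1\log u_2$. For integers $n_1,n_2,n_3$ let $w=n_1\operatorname{LOG}(u_2)\wedge\operatorname{LOG}(u_3)+n_2\operatorname{LOG}(u_1)\wedge\operatorname{LOG}(u_3)+n_3\operatorname{LOG}(u_1)\wedge\operatorname{LOG}(u_2)$. Then $$\|w\|_1=4\big(\max\{|n_2X_2|,|n_3X_3|\}+\max\{|n_1X_1|,|n_2X_2|\}+\max\{|n_1X_1|,|n_3X_3|\}\big)\ge 8\max\{|n_1X_1|,|n_2X_2|,|n_3X_3|\},$$ and consequently every nonzero $w\in\bigwedge^2\operatorname{LOG}(E)$ satisfies $\|w\|_1\ge 8\log(u_1)\log(u_2)$.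
   Context: For a totally real number field $L$, $\operatorname{LOG}:\mathcal{O}_L^*\to\mathbb{R}^{\mathcal{A}_L}$, $\operatorname{LOG}(\gamma)=(\log|\tau(\gamma)|)_\tau$, indexed by the real embeddings $\tau$ of $L$. With the standard orthonormal basis $\{\delta^v\}$ of $\mathbb{R}^{\mathcal{A}_L}$ and $\delta^I=\delta^{v_1}\wedge\cdots\wedge\delta^{v_j}$ for $j$-subsets $I$, the 1-norm of $w=\sum_I c_I\delta^I\in\bigwedge^j\mathbb{R}^{\mathcal{A}_L}$ is $\|w\|_1=\sum_I|c_I|$. For a subgroup $H\subseteq\mathcal{O}_L^*$, $\bigwedge^2\operatorname{LOG}(H)$ is the subgroup generated by all $\operatorname{LOG}(a)\wedge\operatorname{LOG}(b)$ with $a,b\in H$. *)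

From HB Require Import structures.
From mathcomp Require Import all_boot all_order all_algebra all_fingroup all_field.
From mathcomp Require Import all_classical all_reals all_analysis.
Set Implicit Arguments. Unset Strict Implicit. Unset Printing Implicit Defensive.
Import Order.TTheory GRing.Theory Num.Theory.
Local Open Scope ring_scope.

Definition is_alg_int (L : fieldExtType rat) (x : L) : Prop :=
  exists p : {poly int}, p \is monic /\ root (map_poly (intr : int -> L) p) x.

Definition is_OK_unit (L : fieldExtType rat) (K : {subfield L}) (x : L) : Prop :=
  [/\ x \in K, x != 0, is_alg_int x & is_alg_int x^-1].

Definition fundamental_unit (R : realType) (L : fieldExtType rat)
    (iota : {rmorphism L -> R}) (K : {subfield L}) (u : L) : Prop :=
  [/\ is_OK_unit K u, 1 < iota u &
      forall v, is_OK_unit K v -> exists (m : int) (b : bool), v = (-1) ^+ b * u ^ m].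

Definition LOG (R : realType) (L : fieldExtType rat) (n : nat)
    (tau : 'I_n -> {rmorphism L -> R}) (g : L) : 'I_n -> R :=
  fun i => ln `|tau i g|.

(* elements of /\^2 R^n represented by their (antisymmetric) coefficient
   function on pairs (i,j); the coefficient of delta^{i} /\ delta^{j}, i<j, is w i j *)
Definition wedge (R : realType) (n : nat) (a b : 'I_n -> R) : 'I_n -> 'I_n -> R :=
  fun i j => a i * b j - a j * b i.

Definition wnorm1 (R : realType) (n : nat) (w : 'I_n -> 'I_n -> R) : R :=
  \sum_(i < n) \sum_(j < n | (i < j)%N) `|w i j|.

Definition wedge2_LOG (R : realType) (L : fieldExtType rat) (n : nat)
    (tau : 'I_n -> {rmorphism L -> R}) (H : L -> Prop) (w : 'I_n -> 'I_n -> R) : Prop :=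
  exists s : seq (int * L * L),
    (forall t, t \in s -> H t.1.2 /\ H t.2) /\
    w = (fun i j => \sum_(t <- s) t.1.1%:~R * wedge (LOG tau t.1.2) (LOG tau t.2) i j).

(* Each u_i lies in the quadratic subfield K_i, and an automorphism g of L either fixes
   K_i or maps u_i to its conjugate; as u_i * g(u_i) is then a rational unit,
   ln |g u_i| = +- ln u_i. The real embeddings of L are the iota o g with g in the Klein
   group {1, h1, h2, h3}, h_i fixing exactly K_i, so at the four embeddings
   (LOG u1, LOG u2, LOG u3) takes the values (a1,a2,a3), (a1,-a2,-a3), (-a1,a2,-a3),
   (-a1,-a2,a3), where a_i = ln u_i. The coefficients of w on the six pairs of
   embeddings are then +-2(P + Q) and +-2(P - Q) for P, Q among n1 X1, n2 X2, n3 X3, and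
   |P + Q| + |P - Q| = 2 max(|P|, |Q|) gives the formula. For the lower bound,
   /\^2 LOG(E) is spanned over Z by the three wedges of the LOG u_i, and X3 is the
   smallest of the X_i. *)

From HB Require Import structures.
From mathcomp Require Import all_boot all_order all_algebra all_fingroup all_field.
From mathcomp Require Import ring lra.
From mathcomp Require Import all_classical all_reals all_analysis.
Import Order.TTheory GRing.Theory Num.Theory.
Set Implicit Arguments. Unset Strict Implicit.
Local Open Scope group_scope.
Local Open Scope ring_scope.

Lemma rat_alg_int (L : fieldExtType rat) (r : rat) :
  is_alg_int (r%:A : L) -> exists z : int, r = z%:~R.
Proof.
case=> p [mp rp].
have rq : root (map_poly (intr : int -> rat) p) r.
  rewrite -(fmorph_root (in_alg L)) -map_poly_comp.
  by rewrite (eq_map_poly (g := intr)) //= => z; exact: rmorph_int.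
have rc : root (map_poly (intr : int -> algC) p) (ratr r).
  rewrite -(fmorph_root (ratr : {rmorphism rat -> algC})) in rq.
  by rewrite -map_poly_comp (eq_map_poly (g := intr)) in rq => // z /=; rewrite rmorph_int.
have : ratr r \in Aint.
  apply: (root_monic_Aint rc); first exact: monic_map.
  by apply/polyOverP=> i; rewrite coef_map /= rpred_int.
move/(Cint_rat_Aint (Crat_rat r))/intrP=> [z hz].
exists z; apply: (fmorph_inj (ratr : {rmorphism rat -> algC})).
by rewrite /= hz rmorph_int.
Qed.

Lemma norm_rat_unit (R : realType) (L : fieldExtType rat) (f : {rmorphism L -> R}) (x : L) :
  x \in 1%VS -> x != 0 -> is_alg_int x -> is_alg_int x^-1 -> `|f x| = 1.
Proof.
case/vlineP=> r -> nz /rat_alg_int[z hz].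
rewrite -in_algE -fmorphV in_algE => /rat_alg_int[z' hz'].
have r0 : r != 0 by apply: contraNneq nz => ->; rewrite scale0r.
have /intUnitRing.unitzPl : z' * z = 1.
  by apply: (intr_inj (R := rat)); rewrite rmorphM /= -hz -hz' mulVf.
rewrite qualifE /= => /orP[]/eqP z1;
by rewrite alg_num_field fmorph_rat hz ratr_int -intr_norm z1.
Qed.

Lemma alg_int_integral (L : fieldExtType rat) (x : L) :
  is_alg_int x <-> integralOver (intr : int -> L) x.
Proof. by split=> [[p [m r]]|[p m r]]; exists p. Qed.

Lemma alg_int_mul (L : fieldExtType rat) (x y : L) :
  is_alg_int x -> is_alg_int y -> is_alg_int (x * y).
Proof.
move=> /alg_int_integral hx /alg_int_integral hy; apply/alg_int_integral.
exact: (integral_mul (RtoK := intr) hx hy).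
Qed.

Lemma alg_int_gal (L : splittingFieldType rat) (g : gal_of {:L}) (x : L) :
  is_alg_int x -> is_alg_int (g x).
Proof.
case=> p [m r]; exists p; split=> //.
have := rmorph_root (g : {rmorphism L -> L}) r.
by rewrite -map_poly_comp (eq_map_poly (g := intr)) // => z /=; exact: rmorph_int.
Qed.

Lemma mem_index2_mulgV (gT : finGroupType) (G H : {group gT}) (x y : gT) :
  H \subset G -> #|G : H|%g = 2%N -> x \in G :\: H -> y \in G :\: H -> (y * x^-1 \in H)%g.
Proof. by move=> sHG iHG Gx Gy; rewrite -mem_rcoset (rcoset_index2 sHG iHG Gx). Qed.

Lemma gal_mem1 (L : splittingFieldType rat) (g : gal_of {:L}) : g \in 'Gal({:L} / 1%VS).
Proof. by rewrite gal_kHom ?sub1v // k1HomE; exact: ahomWin. Qed.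

Lemma gal1T (L : splittingFieldType rat) : 'Gal({:L} / 1%VS) = [set: gal_of {:L}].
Proof. by apply/setP=> g; rewrite inE gal_mem1. Qed.

Section GaloisOverRat.
Variable L : splittingFieldType rat.
Hypothesis Lgal : galois 1%VS {:L}.

Lemma gal_fixed_rat (a : L) : (forall g : gal_of {:L}, g a = a) -> a \in 1%VS.
Proof.
move=> fixa; rewrite -(galois_fixedField Lgal).
by apply/fixedFieldP=> [|g _]; [exact: memvf | exact: fixa].
Qed.

Lemma galois_subfield (K : {subfield L}) : galois K {:L}.
Proof. by apply: galoisS Lgal; rewrite sub1v subvf. Qed.

Lemma gal_subfield_inj (K K' : {subfield L}) :
  K != K' -> 'Gal({:L} / K) != 'Gal({:L} / K').
Proof.
move=> KK'; apply: contra KK' => /eqP eGal; apply/eqP/val_inj => /=.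
have /galois_fixedField <- := galois_subfield K.
by have /galois_fixedField <- := galois_subfield K'; rewrite eGal.
Qed.

Lemma index_gal_subfield (K : {subfield L}) :
  #|'Gal({:L} / 1%VS) : 'Gal({:L} / K)|%g = \dim K.
Proof.
have gK := galois_subfield K.
rewrite -divgS ?galS ?sub1v // -(galois_dim Lgal) dimv1 divn1.
by rewrite (dim_sup_field (subvf K)) (galois_dim gK) mulKn // cardG_gt0.
Qed.

(* If [g] moves [K], then [u * g u] is fixed by every automorphism since the group
   fixing [K] has index 2; so it is a rational unit and [|f (u * g u)| = 1]. *)
Lemma ln_norm_gal_unit (R : realType) (f : {rmorphism L -> R}) (K : {subfield L})
    (u : L) (g : gal_of {:L}) :
  \dim K = 2%N -> is_OK_unit K u ->
  ln `|f (g u)| = (-1) ^+ (g \notin 'Gal({:L} / K)) * ln `|f u|.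
Proof.
move=> dimK [uK u0 iu iuV]; set H := 'Gal({:L} / K).
have fixH x : x \in H -> x u = u by move=> Hx; apply: (fixed_gal (subvf K)).
have [gH | gNH] := boolP (g \in H); first by rewrite fixH // expr0 mul1r.
have outH x y : x \notin H -> y \notin H -> (y * x^-1)%g \in H.
  move=> xNH yNH; apply: (@mem_index2_mulgV _ 'Gal({:L} / 1%VS)%G);
    by rewrite ?galS ?sub1v ?index_gal_subfield // inE ?xNH ?yNH gal_mem1.
have conjH x : x \notin H -> x u = g u.
  by move=> xNH; rewrite -[g](mulgKV x) galM ?memvf // (fixH _ (outH _ _ xNH gNH)).
have fix_norm (x : gal_of {:L}) : x (u * g u) = u * g u.
  rewrite (rmorphM (x : {rmorphism L -> L})) /= -galM ?memvf //.
  have [xH | xNH] := boolP (x \in H).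
    by rewrite (fixH x xH) conjH // groupMr.
  have gxH : (g * x)%g \in H by rewrite -[x]invgK; apply: outH; rewrite ?groupV.
  by rewrite conjH // (fixH _ gxH) mulrC.
have gu0 : g u != 0 by rewrite (fmorph_eq0 (g : {rmorphism L -> L})).
have norm1 : `|f (u * g u)| = 1.
  apply: norm_rat_unit; rewrite ?mulf_neq0 //; first exact: gal_fixed_rat.
    by apply: alg_int_mul => //; apply: alg_int_gal.
  rewrite invfM -(fmorphV (g : {rmorphism L -> L})).
  by apply: alg_int_mul => //; apply: alg_int_gal.
have fpos (v : L) : v != 0 -> `|f v| \is Num.pos by rewrite posrE normr_gt0 fmorph_eq0.
move/(congr1 (@ln R)): norm1; rewrite rmorphM normrM lnM ?fpos // ln1 expr1 mulN1r.
by move/eqP; rewrite addr_eq0 => /eqP ->; rewrite opprK.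
Qed.

Section RealEmbeddings.
Variables (R : realType) (iota : {rmorphism L -> R}).

Let z := separable_generator 1%AS {:L}%AS.

Lemma adjoin_separable_generator_full : <<1%VS; z>>%VS = {:L}%VS.
Proof.
have /and3P[_ sep _] := Lgal.
by rewrite /z -(@eq_adjoin_separable_generator _ _ {:L}%AS 1%AS) ?sub1v.
Qed.

Lemma map_ratpoly_rmorph (f : {rmorphism L -> R}) (p : {poly L}) :
  p \is a polyOver 1%VS -> map_poly f p = map_poly iota p.
Proof.
move/polyOverP=> p1; apply/polyP=> i; rewrite !coef_map /=.
by have /vlineP[r ->] := p1 i; rewrite alg_num_field !fmorph_rat.
Qed.

Lemma embedding_gal_at_generator (f : {rmorphism L -> R}) (g : gal_of {:L}) :
  f z = iota (g z) -> forall x, f x = iota (g x).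
Proof.
move=> fz x; have xz : x \in <<1%VS; z>>%VS by rewrite adjoin_separable_generator_full memvf.
rewrite -(Fadjoin_poly_eq xz); set p := Fadjoin_poly _ _ _.
have p1 : p \is a polyOver 1%VS by exact: Fadjoin_polyOver.
rewrite -horner_map fz map_ratpoly_rmorph // -[g p.[z]](horner_map (g : {rmorphism L -> L})).
by rewrite (fixedPoly_gal (sub1v _) (gal_mem1 g) p1) horner_map.
Qed.

Lemma gal_inj_at_generator (g g' : gal_of {:L}) : iota (g z) = iota (g' z) -> g = g'.
Proof.
move=> e; apply/eqP/gal_eqP => x _; apply: (fmorph_inj iota).
exact: (embedding_gal_at_generator (f := iota \o (g : {rmorphism L -> L})) e x).
Qed.

(* The roots [iota (g z)] of the minimal polynomial of [z] are pairwise distinct and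
   already exhaust its degree, so [f z] must be one of them. *)
Lemma embedding_gal (f : {rmorphism L -> R}) :
  exists g : gal_of {:L}, forall x, f x = iota (g x).
Proof.
suff [g /eqP fz] : exists g : gal_of {:L}, f z == iota (g z).
  by exists g; apply: embedding_gal_at_generator.
apply/existsP; apply: contraT => /negP fz.
set q := map_poly iota (minPoly 1%VS z).
have q0 : q != 0 by rewrite map_poly_eq0 monic_neq0 ?monic_minPoly.
have card_gal : #|[set: gal_of {:L}]| = \dim {:L}.
  by have := galois_dim Lgal; rewrite dimv1 divn1 gal1T => ->.
have sq : size q = (\dim {:L}).+1.
  by rewrite size_map_poly size_minPoly adjoin_degreeE adjoin_separable_generator_full dimv1 divn1.
set s := f z :: [seq iota ((g : gal_of {:L}) z) | g <- enum [set: gal_of {:L}]].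
have ss : size s = (\dim {:L}).+1 by rewrite /= size_map -cardE card_gal.
have := @max_poly_roots _ q s q0; rewrite ss sq ltnn; apply.
  rewrite /= andbC; apply/andP; split.
    apply/allP=> _ /mapP[g _ ->]; rewrite /q rmorph_root //.
    by apply: root_minPoly_gal; rewrite ?sub1v ?gal_mem1 ?memvf.
  by rewrite /q -(map_ratpoly_rmorph f (minPolyOver _ _)) rmorph_root // root_minPoly.
rewrite /= map_inj_uniq ?enum_uniq ?andbT; last by move=> g g'; apply: gal_inj_at_generator.
by apply/mapP=> -[g _ e]; apply: fz; apply/existsP; exists g; exact/eqP.
Qed.

Lemma embeddings_gal_bij (n : nat) (tau : 'I_n -> {rmorphism L -> R}) :
  (forall i j, i != j -> exists x, tau i x != tau j x) ->
  (forall f : {rmorphism L -> R}, exists i, forall x, f x = tau i x) ->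
  exists2 G : 'I_n -> gal_of {:L}, bijective G & forall i x, tau i x = iota (G i x).
Proof.
move=> tau_inj tau_all.
have [G tauG] := boolp.choice (fun i => embedding_gal (tau i)).
exists G => //.
have Ginj : injective G.
  move=> i j Gij; apply/eqP; apply: contraT => /tau_inj[x].
  by rewrite !tauG Gij eqxx.
apply: (inj_card_bij Ginj); rewrite -cardsT.
have /subset_leq_card : [set: gal_of {:L}] \subset G @: [set: 'I_n].
  apply/fintype.subsetP => g _; have [i tau_i] := tau_all (iota \o (g : {rmorphism L -> L})).
  apply/imsetP; exists i => //; apply: gal_inj_at_generator.
  by rewrite -tauG -tau_i.
by move/leq_trans; apply; rewrite (leq_trans (leq_imset_card _ _)) // cardsT.
Qed.

End RealEmbeddings.
End GaloisOverRat.

(* [alt_form3 N x y] is the coefficient of [delta^i /\ delta^j] in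
   [N1 LOG u2 /\ LOG u3 + N2 LOG u1 /\ LOG u3 + N3 LOG u1 /\ LOG u2] when [x] and [y]
   are the [i]-th and [j]-th coordinates of [(LOG u1, LOG u2, LOG u3)]. *)
Definition alt_form3 (R : nzRingType) (N1 N2 N3 : R) (x y : R * R * R) : R :=
  N1 * (x.1.2 * y.2 - y.1.2 * x.2) + N2 * (x.1.1 * y.2 - y.1.1 * x.2)
  + N3 * (x.1.1 * y.1.2 - y.1.1 * x.1.2).

Definition ln_norm3 (R : realType) (T : Type) (f : T -> R) (x1 x2 x3 : T) : R * R * R :=
  (ln `|f x1|, ln `|f x2|, ln `|f x3|).

Lemma normrD_normrB (R : realDomainType) (x y : R) :
  `|x + y| + `|x - y| = 2 * Num.max `|x| `|y|.
Proof.
have [x0|x0] := lerP 0 x; have [y0|y0] := lerP 0 y;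
  rewrite ?(ger0_norm x0) ?(ltr0_norm x0) ?(ger0_norm y0) ?(ltr0_norm y0);
  have [s0|s0] := lerP 0 (x + y); rewrite ?(ger0_norm s0) ?(ltr0_norm s0);
  have [d0|d0] := lerP 0 (x - y); rewrite ?(ger0_norm d0) ?(ltr0_norm d0);
  rewrite /Num.max; case: ifP => /= ?; lra.
Qed.

Lemma sum_alt_form3_signs (R : realFieldType) (a1 a2 a3 N1 N2 N3 : R) :
  let v := [:: (a1, a2, a3); (a1, -a2, -a3); (-a1, a2, -a3); (-a1, -a2, a3)] in
  \sum_(x <- v) \sum_(y <- v) `|alt_form3 N1 N2 N3 x y|
  = 8 * (Num.max `|N2 * (a1 * a3)| `|N3 * (a1 * a2)|
         + Num.max `|N1 * (a2 * a3)| `|N2 * (a1 * a3)|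
         + Num.max `|N1 * (a2 * a3)| `|N3 * (a1 * a2)|).
Proof.
set P := N1 * (a2 * a3); set Q := N2 * (a1 * a3); set S := N3 * (a1 * a2).
set F := alt_form3 N1 N2 N3.
have anti x y : F y x = - F x y by rewrite /F /alt_form3; ring.
have diag x : F x x = 0 by rewrite /F /alt_form3; ring.
have [e01 e02 e03] : [/\ F (a1, a2, a3) (a1, -a2, -a3) = - (2 * (Q + S)),
    F (a1, a2, a3) (-a1, a2, -a3) = - (2 * (P - S)) &
    F (a1, a2, a3) (-a1, -a2, a3) = 2 * (P + Q)].
  by rewrite /F /alt_form3 /P /Q /S /=; split; ring.
have [e12 e13 e23] : [/\ F (a1, -a2, -a3) (-a1, a2, -a3) = 2 * (P - Q),
    F (a1, -a2, -a3) (-a1, -a2, a3) = - (2 * (P + S)) &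
    F (-a1, a2, -a3) (-a1, -a2, a3) = - (2 * (Q - S))].
  by rewrite /F /alt_form3 /P /Q /S /=; split; ring.
rewrite /= !big_cons !big_nil !diag.
rewrite (anti (a1, a2, a3) (a1, -a2, -a3)) (anti (a1, a2, a3) (-a1, a2, -a3)).
rewrite (anti (a1, a2, a3) (-a1, -a2, a3)) (anti (a1, -a2, -a3) (-a1, a2, -a3)).
rewrite (anti (a1, -a2, -a3) (-a1, -a2, a3)) (anti (-a1, a2, -a3) (-a1, -a2, a3)).
rewrite e01 e02 e03 e12 e13 e23 !(normr0, normrN) !(normrM 2) (ger0_norm (ler0n _ 2)).
have := normrD_normrB Q S; have := normrD_normrB P S; have := normrD_normrB P Q.
lra.
Qed.

Lemma max3_le_sum_max2 (R : realDomainType) (x y z : R) :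
  8 * Num.max `|x| (Num.max `|y| `|z|) <=
  4 * (Num.max `|y| `|z| + Num.max `|x| `|y| + Num.max `|x| `|z|).
Proof.
have := normr_ge0 x; have := normr_ge0 y; have := normr_ge0 z.
move: `|x| `|y| `|z| => p q s *; rewrite /Num.max; repeat case: ifP => /= ?; lra.
Qed.

Lemma wnorm1_antisym (R : realType) (n : nat) (w : 'I_n -> 'I_n -> R) :
  (forall i j, w j i = - w i j) -> wnorm1 w * 2 = \sum_i \sum_j `|w i j|.
Proof.
move=> anti.
have split_ij i j : `|w i j| =
    (if (i < j)%N then `|w i j| else 0) + (if (j < i)%N then `|w j i| else 0).
  case: (ltngtP i j) => [_|_|/val_inj ij]; first by rewrite addr0.
    by rewrite add0r anti normrN.
  subst j; have wii : w i i = 0 by have := anti i i; lra.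
  by rewrite wii normr0 addr0.
under eq_bigr do under eq_bigr do rewrite split_ij.
under eq_bigr do rewrite big_split.
rewrite big_split /= [X in _ = _ + X]exchange_big /=.
suff -> : wnorm1 w = \sum_(i < n) \sum_(j < n) (if (i < j)%N then `|w i j| else 0) by lra.
by apply: eq_bigr => i _; rewrite big_mkcond.
Qed.

Lemma ln_norm_expz (R : realType) (L : fieldType) (f : {rmorphism L -> R}) (x : L) (m : int) :
  x != 0 -> ln `|f (x ^ m)| = m%:~R * ln `|f x|.
Proof.
move=> x0; have fx0 : 0 < `|f x| by rewrite normr_gt0 fmorph_eq0.
case: m => k.
  by rewrite /exprz rmorphXn normrX lnXn // mulrC mulrzr pmulrn.
rewrite NegzE /exprz fmorphV rmorphXn normrV ?unitfE ?expf_neq0 ?fmorph_eq0 //.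
by rewrite normrX lnV ?posrE ?exprn_gt0 // lnXn // mulrC mulrzr mulrNz pmulrn.
Qed.

Lemma LOG_mul_expz (R : realType) (L : fieldExtType rat) (n : nat)
    (tau : 'I_n -> {rmorphism L -> R}) (u1 u2 u3 : L) (m1 m2 m3 : int) i :
  u1 != 0 -> u2 != 0 -> u3 != 0 ->
  LOG tau (u1 ^ m1 * u2 ^ m2 * u3 ^ m3) i =
  m1%:~R * LOG tau u1 i + m2%:~R * LOG tau u2 i + m3%:~R * LOG tau u3 i.
Proof.
move=> u10 u20 u30; rewrite /LOG !rmorphM !normrM.
have pos (u : L) (m : int) : u != 0 -> `|tau i (u ^ m)| \is Num.pos.
  by move=> u0; rewrite posrE normr_gt0 fmorph_eq0 expfz_neq0.
by rewrite !lnM ?pos // ?posrE ?mulr_gt0 -?posrE ?pos // !ln_norm_expz.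
Qed.

Lemma wedge2_LOG_span (R : realType) (L : fieldExtType rat) (n : nat)
    (tau : 'I_n -> {rmorphism L -> R}) (u1 u2 u3 : L) (w : 'I_n -> 'I_n -> R) :
  u1 != 0 -> u2 != 0 -> u3 != 0 ->
  wedge2_LOG tau (fun x : L => exists m1 m2 m3 : int, x = u1 ^ m1 * u2 ^ m2 * u3 ^ m3) w ->
  exists n1 n2 n3 : int, w = (fun i j =>
       n1%:~R * wedge (LOG tau u2) (LOG tau u3) i j
       + n2%:~R * wedge (LOG tau u1) (LOG tau u3) i j
       + n3%:~R * wedge (LOG tau u1) (LOG tau u2) i j).
Proof.
move=> u10 u20 u30 [s [sE ->]].
suff [n1 [n2 [n3 sumE]]] : exists n1 n2 n3 : int, forall i j,
    \sum_(t <- s) t.1.1%:~R * wedge (LOG tau t.1.2) (LOG tau t.2) i j =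
       n1%:~R * wedge (LOG tau u2) (LOG tau u3) i j
       + n2%:~R * wedge (LOG tau u1) (LOG tau u3) i j
       + n3%:~R * wedge (LOG tau u1) (LOG tau u2) i j.
  by exists n1, n2, n3; apply/funext => i; apply/funext => j; apply: sumE.
elim: s sE => [|t s IHs] sE.
  by exists 0, 0, 0 => i j; rewrite big_nil !mul0r !addr0.
have [t' st'|n1 [n2 [n3 sumE]]] := IHs; first by apply: sE; rewrite inE st' orbT.
have [[m1 [m2 [m3 tE1]]] [k1 [k2 [k3 tE2]]]] := sE t (mem_head _ _).
exists (t.1.1 * (m2 * k3 - m3 * k2) + n1), (t.1.1 * (m1 * k3 - m3 * k1) + n2),
  (t.1.1 * (m1 * k2 - m2 * k1) + n3) => i j.
rewrite big_cons sumE /wedge tE1 tE2 !LOG_mul_expz // !(rmorphD, rmorphM, rmorphB) /=.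
ring.
Qed.

Lemma le_max3_norm_intrM (R : realDomainType) (m1 m2 m3 : int) (X1 X2 X3 : R) :
  0 <= X3 -> X3 <= X1 -> X3 <= X2 -> [|| m1 != 0, m2 != 0 | m3 != 0] ->
  X3 <= Num.max `|m1%:~R * X1| (Num.max `|m2%:~R * X2| `|m3%:~R * X3|).
Proof.
have le_norm (m : int) (X : R) : 0 <= X -> m != 0 -> X <= `|m%:~R * X|.
  move=> X0 m0; rewrite normrM (ger0_norm X0) -intr_norm ler_peMl // ler1z.
  by rewrite -gtz0_ge1 normr_gt0.
move=> X30 X31 X32 /or3P[m10|m20|m30]; rewrite !le_max.
- by rewrite (le_trans X31 (le_norm _ _ (le_trans X30 X31) m10)).
- by rewrite (le_trans X32 (le_norm _ _ (le_trans X30 X32) m20)) orbT.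
- by rewrite (le_norm _ _ X30 m30) !orbT.
Qed.

Lemma big2_bij (V : nmodType) (I T : finType) (G : I -> T) (F : T -> T -> V) :
  bijective G -> \sum_i \sum_j F (G i) (G j) = \sum_x \sum_y F x y.
Proof.
move=> bG; rewrite (reindex G (onW_bij _ bG)); apply: eq_bigr => i _.
by rewrite (reindex G (onW_bij _ bG)).
Qed.

Lemma big2_enum (V : nmodType) (T : finType) (U : Type) (F : U -> U -> V) (f : T -> U)
    (s : seq T) :
  uniq s -> (forall x, x \in s) ->
  \sum_x \sum_y F (f x) (f y) = \sum_(a <- map f s) \sum_(b <- map f s) F a b.
Proof.
move=> s_uniq s_full.
have big_s (G : T -> V) : \sum_x G x = \sum_(x <- s) G x.
  by rewrite [RHS]big_uniq //; apply: eq_bigl => x; rewrite s_full.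
rewrite big_s big_map; apply: eq_bigr => x _.
by rewrite big_s big_map.
Qed.

Section BiquadraticField.
Variables (R : realType) (L : splittingFieldType rat) (iota : {rmorphism L -> R}).
Hypothesis Lgal : galois 1%VS {:L}.
Hypothesis Gal22 : 'Gal({:L} / 1%VS) \isog [set: 'Z_2 * 'Z_2].

Lemma card_gal4 : #|'Gal({:L} / 1%VS)| = 4%N.
Proof. by rewrite (card_isog Gal22) cardsT card_prod card_ord. Qed.

Lemma gal_quadratic_subfield (K : {subfield L}) :
  \dim K = 2%N -> exists2 h : gal_of {:L}, h != 1%g & 'Gal({:L} / K) = [set 1%g; h].
Proof.
move=> dimK; have /cards2P[a [b [ab eH]]] : #|'Gal({:L} / K)| == 2%N.
  rewrite -(eqn_pmul2r (_ : 0 < 2)%N) // -{1}dimK -(index_gal_subfield Lgal).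
  by rewrite Lagrange ?galS ?sub1v // card_gal4.
have : 1%g \in 'Gal({:L} / K) := group1 _.
rewrite eH !inE => /orP[]/eqP ->; first by exists b; rewrite // eq_sym.
by exists a; rewrite // finset.setUC.
Qed.

Lemma fundamental_unit_gt0 (K : {subfield L}) (u : L) :
  fundamental_unit iota K u -> 0 < iota u.
Proof. by case=> _ gt1 _; apply: lt_trans gt1. Qed.

Variables (K1 K2 K3 : {subfield L}) (u1 u2 u3 : L).
Hypotheses (dimK1 : \dim K1 = 2%N) (dimK2 : \dim K2 = 2%N) (dimK3 : \dim K3 = 2%N).
Hypotheses (K12 : K1 != K2) (K13 : K1 != K3) (K23 : K2 != K3).
Hypotheses (fu1 : fundamental_unit iota K1 u1) (fu2 : fundamental_unit iota K2 u2)
  (fu3 : fundamental_unit iota K3 u3).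

Local Notation X1 := (ln (iota u2) * ln (iota u3)).
Local Notation X2 := (ln (iota u1) * ln (iota u3)).
Local Notation X3 := (ln (iota u1) * ln (iota u2)).

Lemma gal_biquadratic :
  exists s : seq (gal_of {:L}), [/\ uniq s, forall g, g \in s &
    [seq (g \notin 'Gal({:L} / K1), g \notin 'Gal({:L} / K2), g \notin 'Gal({:L} / K3)) | g <- s]
    = [:: (false, false, false); (false, true, true); (true, false, true); (true, true, false)]].
Proof.
have [h1 h1n eH1] := gal_quadratic_subfield dimK1.
have [h2 h2n eH2] := gal_quadratic_subfield dimK2.
have [h3 h3n eH3] := gal_quadratic_subfield dimK3.
have gal_neq (K K' : {subfield L}) h h' :
    K != K' -> 'Gal({:L} / K) = [set 1%g; h] -> 'Gal({:L} / K') = [set 1%g; h'] -> h != h'.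
  move=> KK' eH eH'; apply: contra (gal_subfield_inj Lgal KK') => /eqP hh'.
  by rewrite eH eH' hh'.
have d12 := gal_neq _ _ _ _ K12 eH1 eH2; have d13 := gal_neq _ _ _ _ K13 eH1 eH3.
have d23 := gal_neq _ _ _ _ K23 eH2 eH3.
have [d21 d31 d32] : [/\ h2 != h1, h3 != h1 & h3 != h2].
  by rewrite !(eq_sym h2) !(eq_sym h3) d12 d13 d23.
have s_uniq : uniq [:: 1%g; h1; h2; h3].
  by rewrite /= !inE !negb_or ![1%g == _]eq_sym h1n h2n h3n d12 d13 d23.
exists [:: 1%g; h1; h2; h3]; split=> // [g|].
  apply: contraT => gNs; have : uniq (g :: [:: 1%g; h1; h2; h3]) by rewrite cons_uniq gNs.
  move/(uniq_leq_size (s2 := enum [set: gal_of {:L}])).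
  by rewrite -cardE -gal1T card_gal4; apply=> x _; rewrite mem_enum gal_mem1.
rewrite /= eH1 eH2 eH3 !inE !eqxx !(negbTE h1n, negbTE h2n, negbTE h3n).
by rewrite !(negbTE d12, negbTE d13, negbTE d23, negbTE d21, negbTE d31, negbTE d32).
Qed.

Lemma sum_alt_form3_gal (N1 N2 N3 : R) :
  \sum_(g : gal_of {:L}) \sum_(h : gal_of {:L})
     `|alt_form3 N1 N2 N3 (ln_norm3 (iota \o g) u1 u2 u3) (ln_norm3 (iota \o h) u1 u2 u3)|
  = 8 * (Num.max `|N2 * X2| `|N3 * X3| + Num.max `|N1 * X1| `|N2 * X2|
         + Num.max `|N1 * X1| `|N3 * X3|).
Proof.
have [s [s_uniq s_full s_signs]] := gal_biquadratic.
rewrite (big2_enum (fun x y => `|alt_form3 N1 N2 N3 x y|)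
  (fun g : gal_of {:L} => ln_norm3 (iota \o g) u1 u2 u3) s_uniq s_full).
rewrite -(gtr0_norm (fundamental_unit_gt0 fu1)) -(gtr0_norm (fundamental_unit_gt0 fu2)).
rewrite -(gtr0_norm (fundamental_unit_gt0 fu3)) -sum_alt_form3_signs.
have [uK1 _ _] := fu1; have [uK2 _ _] := fu2; have [uK3 _ _] := fu3.
set sgn := fun b : bool * bool * bool => ((-1) ^+ b.1.1 * ln `|iota u1|,
  (-1) ^+ b.1.2 * ln `|iota u2|, (-1) ^+ b.2 * ln `|iota u3|).
suff -> : [seq ln_norm3 (iota \o g) u1 u2 u3 | g : gal_of {:L} <- s] =
    map sgn [seq (g \notin 'Gal({:L} / K1), g \notin 'Gal({:L} / K2),
                  g \notin 'Gal({:L} / K3)) | g <- s].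
  by rewrite s_signs /sgn /= !expr0 !expr1 !mul1r !mulN1r.
rewrite -map_comp; apply: eq_map => g; rewrite /ln_norm3 /sgn /=.
rewrite (ln_norm_gal_unit Lgal _ _ dimK1 uK1) (ln_norm_gal_unit Lgal _ _ dimK2 uK2).
by rewrite (ln_norm_gal_unit Lgal _ _ dimK3 uK3).
Qed.

Variables (n : nat) (tau : 'I_n -> {rmorphism L -> R}).
Hypothesis tau_inj : forall i j : 'I_n, i != j -> exists x : L, tau i x != tau j x.
Hypothesis tau_all : forall f : {rmorphism L -> R}, exists i : 'I_n, forall x : L, f x = tau i x.

Local Notation wedge_units n1 n2 n3 := (fun i j =>
  n1%:~R * wedge (LOG tau u2) (LOG tau u3) i j
  + n2%:~R * wedge (LOG tau u1) (LOG tau u3) i j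
  + n3%:~R * wedge (LOG tau u1) (LOG tau u2) i j).

(* The embeddings are the [iota \o g] for [g] in the Galois group and [w] is
   antisymmetric, so [wnorm1 w] is half the double sum of [sum_alt_form3_gal]. *)
Lemma wnorm1_wedge_units (n1 n2 n3 : int) :
  wnorm1 (wedge_units n1 n2 n3) =
  4 * (Num.max `|n2%:~R * X2| `|n3%:~R * X3| + Num.max `|n1%:~R * X1| `|n2%:~R * X2|
       + Num.max `|n1%:~R * X1| `|n3%:~R * X3|).
Proof.
have [G Gbij tauG] := embeddings_gal_bij Lgal iota tau_inj tau_all.
set w := wedge_units n1 n2 n3.
have wE i j : w i j = alt_form3 n1%:~R n2%:~R n3%:~R
    (ln_norm3 (iota \o G i) u1 u2 u3) (ln_norm3 (iota \o G j) u1 u2 u3).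
  by rewrite /w /wedge /LOG /ln_norm3 /= !tauG.
have w_anti i j : w j i = - w i j by rewrite !wE /alt_form3; ring.
have := sum_alt_form3_gal n1%:~R n2%:~R n3%:~R.
rewrite -(big2_bij _ Gbij); under eq_bigr do under eq_bigr do rewrite -wE.
rewrite -(wnorm1_antisym w_anti) => wnorm2.
by apply: (mulIf (_ : 2 != 0)); rewrite ?pnatr_eq0 // wnorm2 mulrAC -natrM.
Qed.

Hypotheses (u12 : iota u1 < iota u2) (u23 : iota u2 < iota u3).

Lemma wnorm1_wedge2_LOG_units (w : 'I_n -> 'I_n -> R) :
  wedge2_LOG tau (fun x : L => exists m1 m2 m3 : int, x = u1 ^ m1 * u2 ^ m2 * u3 ^ m3) w ->
  w <> (fun _ _ => 0) -> 8 * X3 <= wnorm1 w.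
Proof.
have [[_ u10 _ _] gt1 _] := fu1; have [[_ u20 _ _] _ _] := fu2.
have [[_ u30 _ _] _ _] := fu3.
move=> /(wedge2_LOG_span u10 u20 u30)[m1 [m2 [m3 wE]]] w0.
rewrite wE wnorm1_wedge_units (le_trans _ (max3_le_sum_max2 _ _ _)) // ler_pM2l //.
have ln_lt (u v : L) : 0 < iota u -> iota u < iota v -> ln (iota u) < ln (iota v).
  by move=> pu uv; rewrite ltr_ln // posrE // (lt_trans pu uv).
have l1 : 0 < ln (iota u1) by apply: ln_gt0.
have l12 := ln_lt _ _ (fundamental_unit_gt0 fu1) u12.
have l23 := ln_lt _ _ (fundamental_unit_gt0 fu2) u23.
apply: le_max3_norm_intrM.
- by rewrite mulr_ge0 // ltW // (lt_trans l1).
- by rewrite mulrC ler_pM2l ?(lt_trans l1) // ltW // (lt_trans l12).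
- by rewrite ler_pM2l // ltW.
apply: contra_notT w0 => /norP[/negPn/eqP m10 /norP[/negPn/eqP m20 /negPn/eqP m30]].
by rewrite wE m10 m20 m30; apply/funext => i; apply/funext => j; rewrite !mul0r !addr0.
Qed.

End BiquadraticField.

Theorem mainTheorem5 (R : realType) (L : splittingFieldType rat)
    (iota : {rmorphism L -> R})
    (n : nat) (tau : 'I_n -> {rmorphism L -> R})
    (tau_inj : forall i j : 'I_n, i != j -> exists x : L, tau i x != tau j x)
    (tau_all : forall f : {rmorphism L -> R}, exists i : 'I_n, forall x : L, f x = tau i x)
    (Lgal : galois 1%VS {:L})
    (Gal22 : ('Gal({:L} / 1%VS) \isog [set: 'Z_2 * 'Z_2])%g)
    (K1 K2 K3 : {subfield L})
    (dimK1 : \dim K1 = 2%N) (dimK2 : \dim K2 = 2%N) (dimK3 : \dim K3 = 2%N)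
    (K12 : K1 != K2) (K13 : K1 != K3) (K23 : K2 != K3)
    (u1 u2 u3 : L)
    (fu1 : fundamental_unit iota K1 u1) (fu2 : fundamental_unit iota K2 u2)
    (fu3 : fundamental_unit iota K3 u3)
    (u12 : iota u1 < iota u2) (u23 : iota u2 < iota u3) :
  let E := fun x : L => exists m1 m2 m3 : int, x = u1 ^ m1 * u2 ^ m2 * u3 ^ m3 in
  let X1 := ln (iota u2) * ln (iota u3) in
  let X2 := ln (iota u1) * ln (iota u3) in
  let X3 := ln (iota u1) * ln (iota u2) in
  (forall n1 n2 n3 : int,
     let w := fun i j =>
       n1%:~R * wedge (LOG tau u2) (LOG tau u3) i j
       + n2%:~R * wedge (LOG tau u1) (LOG tau u3) i j
       + n3%:~R * wedge (LOG tau u1) (LOG tau u2) i j in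
     wnorm1 w = 4 * (Num.max `|n2%:~R * X2| `|n3%:~R * X3|
                    + Num.max `|n1%:~R * X1| `|n2%:~R * X2|
                    + Num.max `|n1%:~R * X1| `|n3%:~R * X3|)
     /\ 8 * Num.max `|n1%:~R * X1| (Num.max `|n2%:~R * X2| `|n3%:~R * X3|) <= wnorm1 w)
  /\
  (forall w : 'I_n -> 'I_n -> R, wedge2_LOG tau E w -> w <> (fun _ _ => 0) ->
     8 * (ln (iota u1) * ln (iota u2)) <= wnorm1 w).
Proof.
move=> E X1 X2 X3.
have wnormE := wnorm1_wedge_units Lgal Gal22 dimK1 dimK2 dimK3 K12 K13 K23 fu1 fu2 fu3
  tau_inj tau_all.
split=> [n1 n2 n3 w | w].
  by rewrite /w wnormE; split=> //; apply: max3_le_sum_max2.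
exact: (wnorm1_wedge2_LOG_units Lgal Gal22 dimK1 dimK2 dimK3 K12 K13 K23 fu1 fu2 fu3
  tau_inj tau_all u12 u23).
Qed.
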